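(* Let $A$ be a $2\times2$ Hermitian matrix of Laurent polynomials with symmetry type $\mathrm{S}A(z)=\begin{bmatrix}1&\alpha(z)\\ \alpha^\star(z)&1\end{bmatrix}$, where either $\alpha(z)=\epsilon z^{2k+1}$ for some $\epsilon\in\{\pm1\}$, $k\in\mathbb Z$, or $\alpha(z)=z^{2k}$ for some $k\in\mathbb Z$. Suppose $\det(A)=C$ for some negative constant $C$. Then there exist a positive integer $K$ and strongly invertible $2\times2$ matrices $V^{(0)},\dots,V^{(K-1)}$ of Laurent polynomials with compatible symmetry such that $$A^{(K)}(z):=V^{(K-1)}(z)\cdots V^{(0)}(z)A(z)V^{(0)\star}(z)\cdots V^{(K-1)\star}(z)$$ satisfies: (i) all the multiplications in this product are compatible; (ii) at least one entry of $A^{(K)}$ is the zero Laurent polynomial.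
   Context: Laurent polynomials $u(z)=\sum_ku(k)z^k$ with finitely many nonzero complex coefficients. For a matrix $P(z)=\sum_kP(k)z^k$, $P^\star(z):=\sum_k\overline{P(k)}^Tz^{-k}$; Hermitian means $P^\star=P$. $u$ has symmetry of type $\epsilon z^c$ if $u(z)=\epsilon z^cu(z^{-1})$; for nonzero $u$, $\mathrm{S}u(z):=u(z)/u(z^{-1})$; zero has every type; for a type $\beta=\epsilon z^c$, $\beta^\star:=\epsilon z^{-c}$; $\mathrm{S}$ of a matrix is taken entrywise. A type means an expression $\pm z^m$, $m\in\mathbb Z$. An $r\times s$ matrix $P$ has compatible symmetry if there are types $\tau_1,\dots,\tau_r,\rho_1,\dots,\rho_s$ with each $P_{j,k}$ of type $\tau_j^{-1}\rho_k$. A product $P_1P_2\cdots P_m$ of matrices is compatible if there are type vectors $\tau^{(0)},\dots,\tau^{(m)}$ (of matching lengths) such that each entry $(P_i)_{j,k}$ has symmetry type $(\tau^{(i-1)}_j)^{-1}\tau^{(i)}_k$. A square matrix of Laurent polynomials is strongly invertible if its determinant is a nonzero monomial $cz^m$. *)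

(* Laurent polynomials with coefficients in a
   numClosedFieldType C (instantiated with C = R[i], R : realType, i.e. the
   complex numbers) are represented by their coefficient functions, as
   finitely supported functions int -> C (finmap's fsfun with default 0):
   u(z) = \sum_k u k z^k. *)
From HB Require Import structures.
From mathcomp Require Import all_boot all_order all_algebra finmap.
From mathcomp Require Import complex reals.

Set Implicit Arguments.
Unset Strict Implicit.
Unset Printing Implicit Defensive.

Import Order.TTheory GRing.Theory Num.Theory.
Local Open Scope ring_scope.


Section Laurent.
Variable C : numClosedFieldType.

Definition laur := {fsfun int -> C with 0}.

Definition lmono (c : C) (m : int) : laur := [fsfun k in [fset m]%fset => c].

Definition ladd (u v : laur) : laur :=
  [fsfun k in (finsupp u `|` finsupp v)%fset => u k + v k].

Definition lopp (u : laur) : laur := [fsfun k in finsupp u => - u k].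

Definition lmul (u v : laur) : laur :=
  [fsfun k in [fset (i + j)%R | i in finsupp u, j in finsupp v]%fset =>
     \sum_(i <- finsupp u) u i * v (k - i)].

Definition lstar (u : laur) : laur :=
  [fsfun k in [fset (- i)%R | i in finsupp u]%fset => (u (- k))^*].

(* symmetry types  eps z^c  encoded as (b, c) with eps = (-1)^b *)
Definition ltype := (bool * int)%type.
Definition tsign (t : ltype) : C := (-1) ^+ t.1.
Definition tmul (t s : ltype) : ltype := (t.1 (+) s.1, t.2 + s.2).
Definition tinv (t : ltype) : ltype := (t.1, - t.2).
Definition tstar (t : ltype) : ltype := (t.1, - t.2).

(* u has symmetry of type eps z^c :  u(z) = eps z^c u(z^{-1}),
   i.e. coefficientwise  u k = eps * u (c - k). (0 has every type.) *)
Definition has_type (u : laur) (t : ltype) : Prop :=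
  forall k, u k = tsign t * u (t.2 - k).

Definition lmxmul (A B : 'M[laur]_2) : 'M[laur]_2 :=
  \matrix_(i, j) ladd (lmul (A i 0) (B 0 j)) (lmul (A i 1) (B 1 j)).

Definition lmxstar (A : 'M[laur]_2) : 'M[laur]_2 :=
  \matrix_(i, j) lstar (A j i).

Definition ldet2 (A : 'M[laur]_2) : laur :=
  ladd (lmul (A 0 0) (A 1 1)) (lopp (lmul (A 0 1) (A 1 0))).

Definition lhermitian (A : 'M[laur]_2) : Prop := lmxstar A = A.

Definition strongly_invertible (A : 'M[laur]_2) : Prop :=
  exists (c : C) (m : int), c != 0 /\ ldet2 A = lmono c m.

Definition mx_types (A : 'M[laur]_2) (tau rho : 'I_2 -> ltype) : Prop :=
  forall j k, has_type (A j k) (tmul (tinv (tau j)) (rho k)).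

Definition compatible_symmetry (A : 'M[laur]_2) : Prop :=
  exists tau rho, mx_types A tau rho.

(* the product P_1 P_2 ... P_m (given as the list [:: P_1; ...; P_m]) is
   compatible: there are type vectors tau^(0), ..., tau^(m) with each
   (P_i)_{j,k} of type (tau^(i-1)_j)^{-1} tau^(i)_k *)
Fixpoint compat_chain (tau0 : 'I_2 -> ltype) (Ps : seq 'M[laur]_2) : Prop :=
  match Ps with
  | [::] => True
  | P :: Ps' => exists tau1, mx_types P tau0 tau1 /\ compat_chain tau1 Ps'
  end.

Definition compatible_product (Ps : seq 'M[laur]_2) : Prop :=
  exists tau0, compat_chain tau0 Ps.

(* A^(K) = V^(K-1) ... V^(0) A V^(0)star ... V^(K-1)star,
   for Vs = [:: V^(0); ...; V^(K-1)] *)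
Definition conj_by (A : 'M[laur]_2) (Vs : seq 'M[laur]_2) : 'M[laur]_2 :=
  foldl (fun M V => lmxmul (lmxmul V M) (lmxstar V)) A Vs.

Definition conj_factors (A : 'M[laur]_2) (Vs : seq 'M[laur]_2)
  : seq 'M[laur]_2 :=
  rev Vs ++ A :: map lmxstar Vs.

End Laurent.

From HB Require Import structures.
From mathcomp Require Import all_boot all_order all_algebra finmap.
From mathcomp Require Import complex reals.
From mathcomp.multinomials Require Import monalg.
From mathcomp Require Import zify ring.
Set Implicit Arguments.
Unset Strict Implicit.
Unset Printing Implicit Defensive.
Import Order.TTheory GRing.Theory Num.Theory.
Local Open Scope ring_scope.

(* Write a, b, d for the entries of A, so that A_10 = b^*, ad - bb^* is a
   constant and b has type eps z^c. Conjugating by a shear [1 0; x 1], x of the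
   type of b^*, preserves all of this and replaces b by a x^* + b. When
   2 deg a <= 2 deg b - c, a suitable x^* cancels both extreme coefficients of
   b, at degrees deg b and c - deg b, so the support of b gets shorter.
   Otherwise the top degrees in the constant determinant force
   2 deg d < 2 deg b - c, and swapping a and d first makes the shear work.
   Hence, by induction on the length of the support of b, some entry
   eventually vanishes. *)

(* monalg only equips {malg R[K]} with a product when the monoid K has no
   nontrivial units, which rules out the group int; the group algebra
   R[int] = R[z, z^-1] is constructed below along the same lines. *)
Section LaurentRing.
Variable R : comNzRingType.
Implicit Types g : {malg R[int]}.

Definition lpone : {malg R[int]} := << 1 *g 0 >>.

Definition lpmul g1 g2 : {malg R[int]} :=
  \sum_(k1 <- msupp g1) \sum_(k2 <- msupp g2) << g1@_k1 * g2@_k2 *g k1 + k2 >>.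

Lemma lpmul_supp (d1 d2 : {fset int}) g1 g2 :
  (msupp g1 `<=` d1)%fset -> (msupp g2 `<=` d2)%fset ->
  lpmul g1 g2 = \sum_(k1 <- d1) \sum_(k2 <- d2) << g1@_k1 * g2@_k2 *g k1 + k2 >>.
Proof.
move=> le_d1 le_d2; rewrite /lpmul (big_fset_incl _ le_d1) /=.
  apply/eq_bigr=> k1 _; apply/big_fset_incl => // k _ /mcoeff_outdom ->.
  by rewrite mulr0 monalgU0.
move=> k _ /mcoeff_outdom g1k.
by rewrite big1 => // k' _; rewrite g1k mul0r monalgU0.
Qed.

Lemma lpmulC : commutative lpmul.
Proof.
move=> g1 g2; rewrite /lpmul exchange_big; apply/eq_bigr=> k1 _.
by apply/eq_bigr=> k2 _; rewrite mulrC addrC.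
Qed.

Lemma lpmul0g : left_zero 0 lpmul.
Proof. by move=> g; rewrite /lpmul msupp0 big_seq_fset0. Qed.

Lemma lpmulUg c k g :
  lpmul << c *g k >> g = \sum_(k' <- msupp g) << c * g@_k' *g k + k' >>.
Proof.
rewrite (lpmul_supp msuppU_le (fsubset_refl _)) big_seq_fset1.
by apply/eq_bigr => k' _; rewrite mcoeffUU.
Qed.

Lemma lpmulUU c1 c2 k1 k2 :
  lpmul << c1 *g k1 >> << c2 *g k2 >> = << c1 * c2 *g k1 + k2 >>.
Proof. by rewrite (lpmul_supp msuppU_le msuppU_le) !big_seq_fset1 !mcoeffUU. Qed.

Lemma lpmul1g : left_id lpone lpmul.
Proof.
move=> g; rewrite lpmulUg [RHS]monalgE.
by apply/eq_bigr=> k _; rewrite mul1r add0r.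
Qed.

Lemma lpmulDl : left_distributive lpmul +%R.
Proof.
move=> g1 g2 g.
rewrite [in RHS](lpmul_supp (fsubsetUl _ (msupp g2)) (fsubset_refl _)).
rewrite [in RHS](lpmul_supp (fsubsetUr (msupp g1) _) (fsubset_refl _)).
rewrite (lpmul_supp (msuppD_le _ _) (fsubset_refl _)).
rewrite -big_split /=; apply/eq_bigr=> k1 _.
rewrite -big_split /=; apply/eq_bigr=> k2 _.
by rewrite mcoeffD mulrDl monalgUD.
Qed.

Lemma lpmulDr : right_distributive lpmul +%R.
Proof. by move=> g g1 g2; rewrite !(lpmulC g) lpmulDl. Qed.

Lemma lpmulg0 : right_zero 0 lpmul.
Proof. by move=> g; rewrite lpmulC lpmul0g. Qed.

Lemma lpmul_sumUl g1 g2 :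
  lpmul g1 g2 = \sum_(k1 <- msupp g1) lpmul << g1@_k1 *g k1 >> g2.
Proof. by apply/eq_bigr=> k _; rewrite lpmulUg. Qed.

Lemma lpmul_sumUr g1 g2 :
  lpmul g1 g2 = \sum_(k2 <- msupp g2) lpmul g1 << g2@_k2 *g k2 >>.
Proof.
by rewrite lpmulC lpmul_sumUl; apply/eq_bigr=> k _; rewrite lpmulC.
Qed.

Lemma lpmulA : associative lpmul.
Proof.
move=> g1 g2 g3.
rewrite [RHS](big_morph (lpmul^~ _) (fun _ _ => lpmulDl _ _ _) (lpmul0g _)).
rewrite lpmul_sumUl; apply/eq_bigr=> k1 _.
rewrite [LHS](big_morph (lpmul _) (fun _ _ => lpmulDr _ _ _) (lpmulg0 _)).
rewrite [RHS](big_morph (lpmul^~ _) (fun _ _ => lpmulDl _ _ _) (lpmul0g _)).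
apply/eq_bigr=> k2 _.
rewrite [LHS](big_morph (lpmul _) (fun _ _ => lpmulDr _ _ _) (lpmulg0 _)).
by rewrite lpmul_sumUr; apply/eq_bigr=> k3 _; rewrite !lpmulUU mulrA addrA.
Qed.

Lemma lpone_neq0 : lpone != 0.
Proof. by apply/eqP/malgP=> /(_ 0) /eqP; rewrite mcoeffUU mcoeff0 oner_eq0. Qed.

Definition laurent := {malg R[int]}.
HB.instance Definition _ := GRing.Zmodule.on laurent.
HB.instance Definition _ := GRing.Zmodule_isComNzRing.Build laurent
  lpmulA lpmulC lpmul1g lpmulDl lpone_neq0.

End LaurentRing.

Section LaurentCoef.
Variable R : comNzRingType.
Implicit Types (g h : laurent R) (x y : R) (c e : int).

Definition lpmono (x : R) (c : int) : laurent R := << x *g c >>.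

Lemma lpmonoE x c k : (lpmono x c)@_k = x *+ (c == k).
Proof. exact: mcoeffU. Qed.

Lemma lpmonoM x y c e : lpmono x c * lpmono y e = lpmono (x * y) (c + e).
Proof. exact: lpmulUU. Qed.

Lemma lpmono1 : lpmono 1 0 = 1.
Proof. by []. Qed.

Lemma lpmono0 c : lpmono 0 c = 0.
Proof. exact: monalgU0. Qed.

Lemma lpmonoN x c : lpmono (- x) c = - lpmono x c.
Proof. exact: monalgUN. Qed.

Lemma lpcoefM g h k : (g * h)@_k = \sum_(i <- msupp g) g@_i * h@_(k - i).
Proof.
rewrite [g * h]/(lpmul g h) /lpmul raddf_sum; apply: eq_bigr => i _.
rewrite raddf_sum /=.
have [hk|hk] := boolP ((k - i) \in msupp h).
  rewrite (big_fsetD1 (k - i)) //= mcoeffU subrKC eqxx big1_fset ?addr0 //.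
  move=> j; rewrite !inE => /andP [ji _] _; rewrite mcoeffU mulrb.
  by case: eqP => // e; move: ji; rewrite -e addrC addKr eqxx.
rewrite (mcoeff_outdom hk) mulr0 big1_fset // => j jh _.
rewrite mcoeffU mulrb; case: eqP => // e.
by move: hk; rewrite -e addrC addKr jh.
Qed.

Lemma lpcoefM_sub (S : {fset int}) g h k : (msupp g `<=` S)%fset ->
  (g * h)@_k = \sum_(i <- S) g@_i * h@_(k - i).
Proof.
move=> gS; rewrite lpcoefM (big_fset_incl _ gS) // => i _ /mcoeff_outdom ->.
by rewrite mul0r.
Qed.

Lemma lpcoefUM x c g k : (lpmono x c * g)@_k = x * g@_(k - c).
Proof. by rewrite (lpcoefM_sub _ _ msuppU_le) big_seq_fset1 mcoeffUU. Qed.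

Lemma lpcoefMU x c g k : (g * lpmono x c)@_k = x * g@_(k - c).
Proof. by rewrite mulrC lpcoefUM. Qed.

Lemma lpcoefM_top g h p q :
  (forall j, p < j -> g@_j = 0) -> (forall j, q < j -> h@_j = 0) ->
  (g * h)@_(p + q) = g@_p * h@_q /\ forall k, p + q < k -> (g * h)@_k = 0.
Proof.
move=> gp hq; split.
  rewrite (lpcoefM_sub _ _ (fsubsetU1 p (msupp g))) (big_fsetD1 p) ?fsetU11 //=.
  rewrite (_ : p + q - p = q); last by lia.
  rewrite big1_fset ?addr0 // => i; rewrite !inE => /andP[ip _] _.
  have [lt|ge] := ltP p i; first by rewrite gp // mul0r.
  by rewrite hq ?mulr0 //; move: ip ge => /eqP; lia.
move=> k lt; rewrite lpcoefM big1_fset // => i _ _.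
have [lt2|ge] := ltP p i; first by rewrite gp // mul0r.
by rewrite hq ?mulr0 //; lia.
Qed.

End LaurentCoef.

Section Reflection.
Variables (R : comNzRingType) (s : {rmorphism R -> R}).
Implicit Types g h : laurent R.

Definition lpreflect g : laurent R :=
  [malg k in [fset - i | i in msupp g]%fset => s g@_(- k)].

Lemma lpreflectE g k : (lpreflect g)@_k = s g@_(- k).
Proof.
rewrite mcoeffE; case: ifP => // kg.
rewrite mcoeff_outdom ?rmorph0 //; apply: contraFN kg => gk.
by apply/imfsetP; exists (- k); rewrite ?opprK.
Qed.

Lemma lpreflectB : zmod_morphism lpreflect.
Proof.
by move=> g h; apply/malgP => k; rewrite !(lpreflectE, mcoeffB) rmorphB.
Qed.

HB.instance Definition _ := GRing.isZmodMorphism.Build _ _ lpreflect lpreflectB.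

Lemma lpreflectU x c : lpreflect (lpmono x c) = lpmono (s x) (- c).
Proof.
apply/malgP => k; rewrite lpreflectE !lpmonoE eqr_oppLR eq_sym.
by case: eqP; rewrite ?rmorph0.
Qed.

Lemma lpreflectM : {morph lpreflect : g h / g * h}.
Proof.
move=> g h; apply/malgP => k.
have sub : (msupp (lpreflect g) `<=` [fset - i | i in msupp g])%fset.
  apply/fsubsetP => j; rewrite -mcoeff_neq0 lpreflectE => nz.
  rewrite -[j]opprK in_imfset //= -mcoeff_neq0.
  by apply: contra_neq nz => ->; rewrite rmorph0.
rewrite (lpcoefM_sub _ _ sub) lpreflectE lpcoefM rmorph_sum big_imfset /=.
  by apply: eq_bigr => i _; rewrite !lpreflectE rmorphM !opprK opprD.
by move=> x y _ _ /oppr_inj.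
Qed.

Lemma lpreflect1 : lpreflect 1 = 1.
Proof. by rewrite -lpmono1 lpreflectU rmorph1 oppr0. Qed.

HB.instance Definition _ := GRing.isMonoidMorphism.Build _ _ lpreflect
  (lpreflect1, lpreflectM).

End Reflection.

Notation lprev := (lpreflect idfun).
Notation lpstar := (lpreflect Num.conj).

Section SymmetryType.
Variable R : comNzRingType.
Implicit Types (g h : laurent R) (e : R) (c : int).

Definition lptyped g e c := g = lpmono e c * lprev g.

Lemma lptypedE g e c : lptyped g e c <-> forall k, g@_k = e * g@_(c - k).
Proof.
split=> Hg; last by apply/malgP => k; rewrite lpcoefUM lpreflectE opprB.
by move=> k; rewrite {1}Hg lpcoefUM lpreflectE opprB.
Qed.

Lemma lptypedM g h e1 e2 c1 c2 : lptyped g e1 c1 -> lptyped h e2 c2 ->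
  lptyped (g * h) (e1 * e2) (c1 + c2).
Proof. by rewrite /lptyped rmorphM -lpmonoM => {1}-> {1}->; ring. Qed.

Lemma lptypedD g h e c : lptyped g e c -> lptyped h e c -> lptyped (g + h) e c.
Proof. by rewrite /lptyped rmorphD mulrDr => {1}-> {1}->. Qed.

Lemma lptyped0 e c : lptyped 0 e c.
Proof. by rewrite /lptyped rmorph0 mulr0. Qed.

Lemma lptyped1 : lptyped 1 1 0.
Proof. by rewrite /lptyped rmorph1 lpmono1 mulr1. Qed.

End SymmetryType.

Section Star.
Variable C : numClosedFieldType.
Implicit Types (g h : laurent C).

Lemma lpstarK g : lpstar (lpstar g) = g.
Proof. by apply/malgP => k; rewrite !lpreflectE /= opprK conjCK. Qed.

Lemma lpstar_typed g e c : e^* = e -> lptyped g e c -> lptyped (lpstar g) e (- c).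
Proof.
move=> ee Hg; rewrite /lptyped {1}Hg rmorphM /= lpreflectU /= ee; congr (_ * _).
by apply/malgP => k; rewrite !lpreflectE.
Qed.

End Star.

Section Bridge.
Context {C : numClosedFieldType}.
Implicit Types (u v : laur C) (t s : ltype).

Definition lp u : laurent C := mkmalg u.

Lemma lpE u k : (lp u)@_k = u k.
Proof. by []. Qed.

Lemma lp_inj : injective lp.
Proof. by move=> u v []. Qed.

Lemma lpD u v : lp (ladd u v) = lp u + lp v.
Proof. by []. Qed.

Lemma lpN u : lp (lopp u) = - lp u.
Proof. by []. Qed.

Lemma lp_mono c m : lp (lmono c m) = lpmono c m.
Proof.
apply/malgP => k; rewrite lpmonoE lpE /lmono fsfun_fun inE eq_sym mulrb.
by case: eqP.
Qed.

Lemma lpM u v : lp (lmul u v) = lp u * lp v.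
Proof.
apply/malgP => k; rewrite lpcoefM lpE /lmul fsfun_fun.
case: ifP => // kuv; apply/esym/big1_fset => i iu _.
rewrite !lpE; case: (finsuppP v (k - i)) => [|vki]; first by rewrite mulr0.
by move: kuv; rewrite (_ : k = i + (k - i)) ?in_imfset2 //; lia.
Qed.

Lemma lp_star u : lp (lstar u) = lpstar (lp u).
Proof. by []. Qed.

Lemma has_typeE u t : has_type u t <-> lptyped (lp u) (tsign C t) t.2.
Proof. by rewrite lptypedE. Qed.

Lemma tsignM t s : tsign C (tmul t s) = tsign C t * tsign C s.
Proof. by rewrite /tsign /tmul /= signr_addb. Qed.

Lemma tsign_conj t : (tsign C t)^* = tsign C t.
Proof. by rewrite /tsign rmorph_sign. Qed.

Lemma tsign_sqr t : tsign C t * tsign C t = 1.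
Proof. by rewrite /tsign -expr2 sqrr_sign. Qed.

Lemma tsign_neq0 t : tsign C t != 0.
Proof. by rewrite /tsign signr_eq0. Qed.

Lemma has_typeM u v t s : has_type u t -> has_type v s ->
  has_type (lmul u v) (tmul t s).
Proof.
by rewrite !has_typeE lpM tsignM; apply: lptypedM.
Qed.

Lemma has_typeD u v t : has_type u t -> has_type v t -> has_type (ladd u v) t.
Proof. by rewrite !has_typeE lpD; apply: lptypedD. Qed.

Lemma has_type_star u t : has_type u t -> has_type (lstar u) (tstar t).
Proof.
by rewrite !has_typeE lp_star; apply: lpstar_typed; rewrite tsign_conj.
Qed.

Lemma has_type_mono0 t : has_type (lmono (0 : C) 0) t.
Proof. by rewrite has_typeE lp_mono lpmono0; apply: lptyped0. Qed.

Lemma has_type_mono1 : has_type (lmono (1 : C) 0) (false, 0).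
Proof. by rewrite has_typeE lp_mono lpmono1; apply: lptyped1. Qed.

End Bridge.

Lemma tmul_chain x y z :
  tmul (tmul (tinv x) y) (tmul (tinv y) z) = tmul (tinv x) z.
Proof.
case: x y z => [b1 c1] [b2 c2] [b3 c3]; rewrite /tmul /tinv /=.
by congr pair; [case: b1; case: b2; case: b3 | lia].
Qed.

Lemma tstar_tmul x y : tstar (tmul (tinv x) y) = tmul (tinv y) x.
Proof.
case: x y => [b1 c1] [b2 c2]; rewrite /tmul /tinv /tstar /=.
by congr pair; [case: b1; case: b2 | lia].
Qed.

Lemma tmulVt x : tmul (tinv x) x = (false, 0).
Proof. by case: x => b c; rewrite /tmul /tinv /= addbb addNr. Qed.

Lemma big_ord2 (V : nmodType) (F : 'I_2 -> V) : \sum_(i < 2) F i = F 0 + F 1.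
Proof. by rewrite big_ord_recl big_ord1; congr (_ + F _); apply: val_inj. Qed.

Lemma det_mx2 (R : comNzRingType) (M : 'M[R]_2) :
  \det M = M 0 0 * M 1 1 - M 0 1 * M 1 0.
Proof.
rewrite (expand_det_row _ 0) big_ord2 /cofactor !det_mx11 !mxE /=.
have -> : lift 0 0 = 1 :> 'I_2 by apply: val_inj.
have -> : lift 1 0 = 0 :> 'I_2 by apply: val_inj.
by rewrite expr0 expr1 mul1r mulN1r mulrN.
Qed.

Section Matrices.
Variable C : numClosedFieldType.
Implicit Types (P Q : 'M[laur C]_2) (s r p : 'I_2 -> ltype).

Lemma mx_types_mul P Q s r p :
  mx_types P s r -> mx_types Q r p -> mx_types (lmxmul P Q) s p.
Proof.
move=> HP HQ j k; rewrite mxE.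
apply: has_typeD; [rewrite -(tmul_chain _ (r 0)) | rewrite -(tmul_chain _ (r 1))].
  all: exact: has_typeM.
Qed.

Lemma mx_types_star P s r : mx_types P s r -> mx_types (lmxstar P) r s.
Proof. by move=> HP j k; rewrite mxE -tstar_tmul; apply: has_type_star. Qed.

Definition mxstar m n (M : 'M[laurent C]_(m, n)) : 'M_(n, m) :=
  (map_mx lpstar M)^T.

Lemma mxstarE m n (M : 'M[laurent C]_(m, n)) i j : mxstar M i j = lpstar (M j i).
Proof. by rewrite !mxE. Qed.

Lemma mxstarM m n q (M : 'M[laurent C]_(m, n)) (N : 'M_(n, q)) :
  mxstar (M *m N) = mxstar N *m mxstar M.
Proof. by rewrite /mxstar map_mxM trmx_mul. Qed.

Lemma mxstarK m n (M : 'M[laurent C]_(m, n)) : mxstar (mxstar M) = M.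
Proof. by apply/matrixP => i j; rewrite !mxstarE lpstarK. Qed.

Lemma det_mxstar n (M : 'M[laurent C]_n) : \det (mxstar M) = lpstar (\det M).
Proof. by rewrite det_tr det_map_mx. Qed.

Definition lpmx P : 'M[laurent C]_2 := map_mx (@lp C) P.

Lemma lpmxE P i j : lpmx P i j = lp (P i j).
Proof. exact: mxE. Qed.

Lemma lpmxM P Q : lpmx (lmxmul P Q) = lpmx P *m lpmx Q.
Proof.
by apply/matrixP => i j; rewrite !mxE big_ord2 !mxE lpD !lpM.
Qed.

Lemma lpmx_star P : lpmx (lmxstar P) = mxstar (lpmx P).
Proof. by apply/matrixP => i j; rewrite !mxE lp_star. Qed.

Lemma lp_det P : lp (ldet2 P) = \det (lpmx P).
Proof. by rewrite det_mx2 !mxE lpD lpN !lpM. Qed.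

End Matrices.

Section Degree.
Variable R : idomainType.
Implicit Types (g h : laurent R) (d l : int) (n : nat).

Definition is_degree g d := g@_d != 0 /\ forall k, d < k -> g@_k = 0.

Definition width_le g n := exists l, forall k, g@_k != 0 -> l <= k < l + n%:Z.

Lemma exists_degree g : g != 0 -> exists d, is_degree g d.
Proof.
move=> g0; case E: (msupp g : seq int) => [|k0 ks].
  case/eqP: g0; apply/malgP => k; rewrite mcoeff0 mcoeff_outdom //.
  by rewrite -[_ \in _]/(k \in (msupp g : seq int)) E.
have gk0 : k0 \in msupp g.
  by rewrite -[_ \in _]/(k0 \in (msupp g : seq int)) E mem_head.
pose d := \big[Order.max/k0]_(k <- msupp g) k.
have dg : d \in msupp g.
  rewrite /d big_seq; apply: (big_ind (fun x => x \in msupp g)) => // x y.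
  by rewrite /Num.max; case: ifP.
exists d; split; first by rewrite mcoeff_neq0.
move=> k dk; apply: mcoeff_outdom; apply: contraTN dk => gk.
by rewrite -leNgt; apply: le_bigmax_seq.
Qed.

Lemma exists_width g : exists n, width_le g n.
Proof.
pose N := (\sum_(k <- msupp g) `|k|)%N.
exists (2 * N + 1)%N, (- N%:Z) => k gk.
have : (`|k| <= N)%N by rewrite /N (big_rem k) /= ?leq_addr // -mcoeff_neq0.
lia.
Qed.

Lemma width_le_lt g n i j :
  width_le g n -> g@_i != 0 -> g@_j != 0 -> j - i < n%:Z.
Proof. by move=> [l Hl] /Hl gi /Hl gj; lia. Qed.

Lemma typed_low_degree g e c d : lptyped g e c -> e != 0 -> is_degree g d ->
  g@_(c - d) != 0 /\ forall k, k < c - d -> g@_k = 0.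
Proof.
move=> /lptypedE Hg e0 [gd gup]; split; first by rewrite Hg subKr mulf_neq0.
by move=> k lt; rewrite Hg gup ?mulr0 //; lia.
Qed.

Lemma const_det_deg_le (a d b f : laurent R) c0 (ha hd hb hf : int) :
  a * d - b * f = lpmono c0 0 -> is_degree a ha -> is_degree d hd ->
  is_degree b hb -> is_degree f hf -> 0 <= hb + hf -> ha + hd <= hb + hf.
Proof.
move=> det [a0 aup] [d0 dup] [_ bup] [_ fup] hbf; rewrite leNgt; apply/negP => lt.
have := congr1 (mcoeff (ha + hd)) det; rewrite mcoeffB lpmonoE.
have [-> _] := lpcoefM_top aup dup; have [_ ->] := lpcoefM_top bup fup => //.
rewrite subr0 (_ : (0 == ha + hd) = false); last by apply/eqP; lia.
by move/eqP; rewrite mulf_eq0 (negbTE a0) (negbTE d0).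
Qed.

End Degree.

(* With p = hb - ha, the correction s = kap z^p + e kap z^(c - p) kills the
   top coefficient of a s + b, and the symmetry of a s + b then kills the
   bottom one. When 2p = c the two monomials coincide, and z^p alone has type
   z^c: this is where the parity condition on the type of b is needed. *)
Lemma leading_cancel (R : fieldType) (a b : laurent R) e c ha hb :
  lptyped a 1 0 -> lptyped b e c -> e * e = 1 -> (forall k, c = 2 * k -> e = 1) ->
  is_degree a ha -> is_degree b hb -> 2 * ha <= 2 * hb - c ->
  exists2 s, lptyped s e c &
    forall k, k <= c - hb \/ hb <= k -> (a * s + b)@_k = 0.
Proof.
move=> Ha Hb e2 even_e [a0 aup] [b0 bup] hab.
pose kap := - (b@_hb / a@_ha).
pose s := lpmono kap (hb - ha) +
  (if 2 * (hb - ha) == c then 0 else lpmono (e * kap) (c - (hb - ha))).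
have Hs : lptyped s e c.
  rewrite /lptyped /s; case: eqP => [cp|cp].
    rewrite (even_e _ (esym cp)) addr0 lpreflectU lpmonoM /=.
    by congr lpmono; [ring | lia].
  rewrite rmorphD /= !lpreflectU mulrDr !lpmonoM /= addrC mulrA e2.
  by congr (lpmono _ _ + lpmono _ _); ring.
have Has : lptyped (a * s + b) e c.
  by apply: lptypedD => //; have := lptypedM Ha Hs; rewrite mul1r add0r.
have top k : hb <= k -> (a * s + b)@_k = 0.
  move=> hk; rewrite mcoeffD; have -> : (a * s)@_k = kap * a@_(k - (hb - ha)).
    rewrite /s mulrDr mcoeffD lpcoefMU; case: eqP => cp.
      by rewrite mulr0 mcoeff0 addr0.
    by rewrite lpcoefMU (aup (k - (c - (hb - ha)))) ?mulr0 ?addr0 //; lia.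
  case: (ltgtP k hb) hk => // [lt _|-> _].
    by rewrite aup ?bup ?mulr0 ?addr0 //; lia.
  by rewrite (_ : hb - (hb - ha) = ha) ?mulNr ?divfK ?addNr //; lia.
exists s => // k [lo|]; last exact: top.
by move/lptypedE: Has => ->; rewrite top ?mulr0 //; lia.
Qed.

Lemma forall_ord2 (P : 'I_2 -> Prop) : P 0 -> P 1 -> forall i, P i.
Proof.
move=> P0 P1 [[|[|//]] i].
  by rewrite (_ : Ordinal i = 0) //; apply: val_inj.
by rewrite (_ : Ordinal i = 1) //; apply: val_inj.
Qed.

Definition admissible (a : ltype) :=
  (exists (eps : bool) (k : int), a = (eps, 2 * k + 1)) \/
  (exists k : int, a = (false, 2 * k)).

Lemma admissible_star a : admissible a -> admissible (tstar a).
Proof.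
case=> [[eps [k ->]]|[k ->]]; rewrite /tstar /=.
  by left; exists eps, (- k - 1); congr pair; lia.
by right; exists (- k); congr pair; lia.
Qed.

Lemma admissible_even a k : admissible a -> a.2 = 2 * k -> a.1 = false.
Proof. by case=> [[eps [k' ->]] /= /eqP|[k' ->]]; first lia. Qed.

Definition off_type (t : 'I_2 -> ltype) := tmul (tinv (t 0)) (t 1).

Definition tswap (t : 'I_2 -> ltype) (j : 'I_2) := if j == 0 then t 1 else t 0.

Lemma off_type_swap t : off_type (tswap t) = tstar (off_type t).
Proof. by rewrite /off_type tstar_tmul. Qed.

Section Conjugation.
Variable C : numClosedFieldType.
Implicit Types (A P V : 'M[laur C]_2) (t s r : 'I_2 -> ltype).

Fixpoint typed_chain s (Ps : seq 'M[laur C]_2) r : Prop :=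
  if Ps is P :: Ps' then exists s1, mx_types P s s1 /\ typed_chain s1 Ps' r
  else s = r.

Lemma typed_chain_cat s Ps r Qs p :
  typed_chain s Ps r -> typed_chain r Qs p -> typed_chain s (Ps ++ Qs) p.
Proof.
elim: Ps s => [|P Ps IH] s /=; first by move=> ->.
by move=> [s1 [H1 H2]] H3; exists s1; split => //; apply: IH.
Qed.

Lemma typed_chain_compat s Ps r : typed_chain s Ps r -> compat_chain s Ps.
Proof.
elim: Ps s => [|P Ps IH] s //= [s1 [H1 H2]].
by exists s1; split => //; apply: IH H2.
Qed.

Fixpoint conj_chain t (Vs : seq 'M[laur C]_2) : Prop :=
  if Vs is V :: Vs' then exists s, mx_types V s t /\ conj_chain s Vs' else True.

Lemma conj_chain_typed Vs t Mid : conj_chain t Vs -> typed_chain t Mid t ->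
  exists s, typed_chain s (rev Vs ++ Mid ++ map (@lmxstar C) Vs) s.
Proof.
elim: Vs t Mid => [|V Vs IH] t Mid /=.
  by move=> _ H; exists t; rewrite cats0.
move=> [s [HV Hg]] HM.
have HM' : typed_chain s (V :: Mid ++ [:: lmxstar V]) s.
  exists t; split => //; apply: typed_chain_cat HM _.
  by exists s; split => //; apply: mx_types_star.
have [s' Hs'] := IH s _ Hg HM'; exists s'.
by rewrite rev_cons -cats1 -!catA /= -catA in Hs' *.
Qed.

Lemma conj_factors_compatible A t Vs : mx_types A t t -> conj_chain t Vs ->
  compatible_product (conj_factors A Vs).
Proof.
move=> HA Hg; have [|s Hs] := conj_chain_typed (Mid := [:: A]) Hg.
  by exists t; split.
by exists s; apply: typed_chain_compat Hs.
Qed.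

Definition conj1 V A := lmxmul (lmxmul V A) (lmxstar V).

Lemma lpmx_conj1 V A : lpmx (conj1 V A) = lpmx V *m lpmx A *m mxstar (lpmx V).
Proof. by rewrite /conj1 !lpmxM lpmx_star. Qed.

Definition zero_entry_reachable A t := exists Vs : seq 'M[laur C]_2,
  [/\ (0 < size Vs)%N,
      forall V, V \in Vs -> strongly_invertible V /\ compatible_symmetry V,
      conj_chain t Vs &
      exists j k : 'I_2, forall n : int, conj_by A Vs j k n = 0].

Lemma reachable_conj1 V A s t : strongly_invertible V -> mx_types V s t ->
  zero_entry_reachable (conj1 V A) s -> zero_entry_reachable A t.
Proof.
move=> SV TV [Vs [_ HV Hg Hz]]; exists (V :: Vs); split => //; last by exists s.
move=> W; rewrite in_cons => /orP [/eqP ->|]; last exact: HV.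
by split => //; exists s, t.
Qed.

Definition admissible_mx A t :=
  [/\ mxstar (lpmx A) = lpmx A, mx_types A t t, admissible (off_type t) &
      exists c0, \det (lpmx A) = lpmono c0 0].

Lemma admissible_mx_conj1 V A s t : admissible_mx A t -> mx_types V s t ->
  admissible (off_type s) -> \det (lpmx V) * lpstar (\det (lpmx V)) = 1 ->
  admissible_mx (conj1 V A) s.
Proof.
move=> [HM HT _ [c0 Hdet]] TV adm dV; split => //.
- by rewrite lpmx_conj1 !mxstarM mxstarK HM mulmxA.
- exact: mx_types_mul (mx_types_mul TV HT) (mx_types_star TV).
- exists c0; rewrite lpmx_conj1 !det_mulmx det_mxstar Hdet.
  by rewrite mulrAC dV mul1r.
Qed.

End Conjugation.

Section ElementaryMatrices.
Context {C : numClosedFieldType}.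
Implicit Types (A V : 'M[laur C]_2) (t : 'I_2 -> ltype) (x : laur C).

Local Notation lone := (lmono (1 : C) 0).
Local Notation lzero := (lmono (0 : C) 0).

Definition mx2 (x y z w : laur C) : 'M[laur C]_2 :=
  \matrix_(i, j) if i == 0 then if j == 0 then x else y
                 else if j == 0 then z else w.

Definition shear x := mx2 lone lzero x lone.
Definition swap := mx2 lzero lone lone lzero.

Lemma lp_one : lp lone = 1.
Proof. by rewrite lp_mono. Qed.

Lemma lp_zero : lp lzero = 0.
Proof. by rewrite lp_mono lpmono0. Qed.

Lemma strongly_invertible_lpdet V c m :
  c != 0 -> \det (lpmx V) = lpmono c m -> strongly_invertible V.
Proof.
by move=> c0 dV; exists c, m; split => //; apply: lp_inj; rewrite lp_det lp_mono.
Qed.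

Lemma det_shear x : \det (lpmx (shear x)) = 1.
Proof. by rewrite det_mx2 !mxE /= lp_one lp_zero mulr1 mul0r subr0. Qed.

Lemma det_swap : \det (lpmx swap) = -1.
Proof. by rewrite det_mx2 !mxE /= lp_one lp_zero mulr0 mulr1 sub0r. Qed.

Lemma shear_strongly_invertible x : strongly_invertible (shear x).
Proof.
by apply: (strongly_invertible_lpdet (oner_neq0 C) (m := 0)); rewrite det_shear.
Qed.

Lemma swap_strongly_invertible : strongly_invertible swap.
Proof.
apply: (strongly_invertible_lpdet (c := -1) (m := 0)).
  by rewrite oppr_eq0 oner_eq0.
by rewrite det_swap lpmonoN.
Qed.

Lemma shear_types x t : has_type x (tstar (off_type t)) -> mx_types (shear x) t t.
Proof.
rewrite tstar_tmul => Hx.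
apply: forall_ord2; apply: forall_ord2; rewrite !mxE /= ?tmulVt //;
  by [apply: has_type_mono0 | apply: has_type_mono1].
Qed.

Lemma swap_types t : mx_types swap (tswap t) t.
Proof.
apply: forall_ord2; apply: forall_ord2; rewrite !mxE /tswap /= ?tmulVt;
  by [apply: has_type_mono0 | apply: has_type_mono1].
Qed.

Lemma shear_conj x A :
  lp (conj1 (shear x) A 0 0) = lp (A 0 0) /\
  lp (conj1 (shear x) A 0 1) = lp (A 0 0) * lpstar (lp x) + lp (A 0 1).
Proof.
rewrite -!lpmxE lpmx_conj1; split; rewrite !mxE !big_ord2 !mxE !big_ord2 !mxE /=;
  by rewrite lp_one lp_zero ?rmorph0 ?rmorph1; ring.
Qed.

Lemma swap_conj A :
  lp (conj1 swap A 0 0) = lp (A 1 1) /\ lp (conj1 swap A 0 1) = lp (A 1 0).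
Proof.
rewrite -!lpmxE lpmx_conj1; split; rewrite !mxE !big_ord2 !mxE !big_ord2 !mxE /=;
  by rewrite lp_one lp_zero ?rmorph0 ?rmorph1; ring.
Qed.

Lemma reachable_of_zero_entry A t i j :
  mx_types A t t -> lp (A i j) = 0 -> zero_entry_reachable A t.
Proof.
move=> HT Aij; have TI : mx_types (shear lzero) t t.
  by apply: shear_types; apply: has_type_mono0.
have I1 : lpmx (shear lzero) = 1.
  apply/matrixP; apply: forall_ord2; apply: forall_ord2;
    by rewrite !mxE /= ?lp_one ?lp_zero.
exists [:: shear lzero]; split => //; last first.
- exists i, j => n; have : lpmx (conj1 (shear lzero) A) i j = 0.
    by rewrite lpmx_conj1 I1 /mxstar map_mx1 trmx1 mul1mx mulmx1 mxE.
  by rewrite mxE => /(congr1 (mcoeff n)); rewrite lpE mcoeff0.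
- by exists t.
- move=> V; rewrite inE => /eqP ->.
  by split; [exact: shear_strongly_invertible | exists t, t].
Qed.

End ElementaryMatrices.

Section Descent.
Variable C : numClosedFieldType.
Implicit Types (A : 'M[laur C]_2) (t : 'I_2 -> ltype) (g : laurent C).

Lemma admissible_sign a k : admissible a -> a.2 = 2 * k -> tsign C a = 1.
Proof. by move=> adm /(admissible_even adm); rewrite /tsign => ->. Qed.

Lemma width_le_star g n : width_le g n -> width_le (lpstar g) n.
Proof.
move=> [l Hl]; exists (- (l + n%:Z) + 1) => k.
by rewrite lpreflectE conjC_eq0 => /Hl; lia.
Qed.

Lemma typed_star_degree g e c hb : lptyped g e c -> e != 0 -> is_degree g hb ->
  is_degree (lpstar g) (hb - c) /\ c - hb <= hb.
Proof.
move=> Hg e0 Hdg; have [lo below] := typed_low_degree Hg e0 Hdg; split.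
  split=> [|k lt]; rewrite lpreflectE /= ?opprB; first by rewrite conjC_eq0.
  by rewrite below ?conjC0 //; lia.
by rewrite leNgt; apply: contra lo => lt; rewrite Hdg.2.
Qed.

Lemma admissible_mx_entries A t : admissible_mx A t ->
  [/\ lptyped (lp (A 0 0)) 1 0,
      lptyped (lp (A 0 1)) (tsign C (off_type t)) (off_type t).2,
      lp (A 1 0) = lpstar (lp (A 0 1)) &
      exists c0, lp (A 0 0) * lp (A 1 1) - lp (A 0 1) * lp (A 1 0) = lpmono c0 0].
Proof.
move=> [HM HT _ [c0 Hdet]]; split.
- by have := HT 0 0; rewrite tmulVt has_typeE.
- by rewrite -has_typeE; apply: HT.
- by have := congr1 (fun M : 'M_2 => M 1 0) HM; rewrite !mxE.
- by exists c0; rewrite -Hdet det_mx2 !mxE.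
Qed.

Lemma admissible_mx_deg_le A t ha hb hd : admissible_mx A t ->
  is_degree (lp (A 0 0)) ha -> is_degree (lp (A 0 1)) hb ->
  is_degree (lp (A 1 1)) hd -> ha + hd <= 2 * hb - (off_type t).2.
Proof.
move=> HA Hda Hdb Hdd; have [_ Hb -> [c0 Hdet]] := admissible_mx_entries HA.
have [Hdb' hb_ge] := typed_star_degree Hb (tsign_neq0 _) Hdb.
have := const_det_deg_le Hdet Hda Hdd Hdb Hdb'; lia.
Qed.

Lemma shear_step A t n ha hb : admissible_mx A t -> width_le (lp (A 0 1)) n ->
  is_degree (lp (A 0 0)) ha -> is_degree (lp (A 0 1)) hb ->
  2 * ha <= 2 * hb - (off_type t).2 ->
  exists x m, [/\ (m < n)%N, has_type x (tstar (off_type t)),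
    admissible_mx (conj1 (shear x) A) t &
    width_le (lp (conj1 (shear x) A 0 1)) m].
Proof.
move=> HA Hw Hda Hdb hab; have [Ha Hb _ _] := admissible_mx_entries HA.
have [_ _ adm _] := HA.
have [s Hs Hcancel] := leading_cancel Ha Hb (tsign_sqr _)
  (fun k => admissible_sign adm) Hda Hdb hab.
pose x := malg_val (lpstar s).
have lpx : lp x = lpstar s by rewrite /x; case: (lpstar s).
have Hx : has_type x (tstar (off_type t)).
  by rewrite has_typeE lpx; apply: lpstar_typed (tsign_conj _) Hs.
have [_] := shear_conj x A; rewrite lpx lpstarK => E01.
exists x, (absz (2 * hb - (off_type t).2)%R); split.
- have [lo _] := typed_low_degree Hb (tsign_neq0 _) Hdb.
  have [_ hb_ge] := typed_star_degree Hb (tsign_neq0 _) Hdb.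
  have := width_le_lt Hw lo Hdb.1; lia.
- exact: Hx.
- apply: admissible_mx_conj1 HA (shear_types Hx) adm _.
  by rewrite det_shear rmorph1 mulr1.
- exists ((off_type t).2 - hb + 1) => k; rewrite E01 => nz.
  have : ~ (k <= (off_type t).2 - hb \/ hb <= k).
    by move/Hcancel => z; rewrite z eqxx in nz.
  lia.
Qed.

Lemma swap_step A t n hb hd : admissible_mx A t -> width_le (lp (A 0 1)) n ->
  is_degree (lp (A 0 1)) hb -> is_degree (lp (A 1 1)) hd ->
  [/\ admissible_mx (conj1 swap A) (tswap t), width_le (lp (conj1 swap A 0 1)) n,
      is_degree (lp (conj1 swap A 0 0)) hd &
      is_degree (lp (conj1 swap A 0 1)) (hb - (off_type t).2)].
Proof.
move=> HA Hw Hdb Hdd; have [_ Hb Hb' _] := admissible_mx_entries HA.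
have [_ _ adm _] := HA; have [E00 E01] := swap_conj A.
rewrite E00 E01 Hb'; split.
- apply: admissible_mx_conj1 HA (swap_types t) _ _.
    by rewrite off_type_swap; apply: admissible_star.
  by rewrite det_swap rmorphN rmorph1 mulrNN mulr1.
- exact: width_le_star.
- exact: Hdd.
- by have [] := typed_star_degree Hb (tsign_neq0 _) Hdb.
Qed.

Lemma admissible_mx_reachable n A t :
  admissible_mx A t -> width_le (lp (A 0 1)) n -> zero_entry_reachable A t.
Proof.
elim/ltn_ind: n A t => n IH A t HA Hw; have [_ HT _ _] := HA.
have [a0|/exists_degree [ha Hda]] := eqVneq (lp (A 0 0)) 0.
  exact: reachable_of_zero_entry HT a0.
have [b0|/exists_degree [hb Hdb]] := eqVneq (lp (A 0 1)) 0.
  exact: reachable_of_zero_entry HT b0.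
have [d0|/exists_degree [hd Hdd]] := eqVneq (lp (A 1 1)) 0.
  exact: reachable_of_zero_entry HT d0.
have [le|gt] := lerP (2 * ha) (2 * hb - (off_type t).2).
  have [x [m [lt Hx HB HwB]]] := shear_step HA Hw Hda Hdb le.
  apply: reachable_conj1 (shear_strongly_invertible x) (shear_types Hx) _.
  exact: IH m lt _ _ HB HwB.
have hsum := admissible_mx_deg_le HA Hda Hdb Hdd.
have [HS HwS HdS HbS] := swap_step HA Hw Hdb Hdd.
have [|x [m [lt Hx HB HwB]]] := shear_step HS HwS HdS HbS.
  by rewrite off_type_swap; move: hsum gt; case: (off_type t) => b c /=; lia.
apply: reachable_conj1 swap_strongly_invertible (swap_types t) _.
apply: reachable_conj1 (shear_strongly_invertible x) (shear_types Hx) _.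
exact: IH m lt _ _ HB HwB.
Qed.

End Descent.

Theorem lemma3p7 (R : realType) (A : 'M[laur R[i]]_2) (alpha : ltype)
  (C : R[i]) :
  lhermitian A ->
  has_type (A 0 0) (false, 0%Z) ->
  has_type (A 0 1) alpha ->
  has_type (A 1 0) (tstar alpha) ->
  has_type (A 1 1) (false, 0%Z) ->
  ((exists (eps : bool) (k : int), alpha = (eps, 2 * k + 1)) \/
   (exists k : int, alpha = (false, 2 * k))) ->
  C < 0 ->
  ldet2 A = lmono C 0 ->
  exists Vs : seq 'M[laur R[i]]_2,
    (0 < size Vs)%N /\
    (forall V, V \in Vs -> strongly_invertible V /\ compatible_symmetry V) /\
    compatible_product (conj_factors A Vs) /\
    exists (j k : 'I_2), forall n : int, conj_by A Vs j k n = 0.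
Proof.
(* Only the constancy of the determinant matters, not its sign. *)
move=> Hh H00 H01 H10 H11 adm _ Hdet.
pose t (j : 'I_2) := if j == 0 then (false, 0%Z) else alpha.
have e0a : tmul (tinv (false, 0%Z)) alpha = alpha.
  by case: (alpha) => b c; rewrite /tmul /tinv /= oppr0 add0r.
have HT : mx_types A t t.
  apply: forall_ord2; apply: forall_ord2; rewrite /t /= ?tmulVt ?e0a //.
  by rewrite -tstar_tmul e0a.
have HA : admissible_mx A t.
  split => //; first by rewrite -lpmx_star Hh.
    by rewrite /off_type /t /= e0a.
  by exists C; rewrite -lp_det Hdet lp_mono.
have [n Hw] := exists_width (lp (A 0 1)).
have [Vs [? ? HV ?]] := admissible_mx_reachable HA Hw.
by exists Vs; do !split => //; apply: conj_factors_compatible HT HV.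
Qed.
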